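(* For $|q|<1$, $$1+\sum_{n=1}^\infty\frac{q^{(2n-1)^2}(-q;q^2)_{2n-1}\left(-1+q^{4n-1}+q^{8n}+q^{8n-2}\right)}{(q^4;q^4)_{2n}}=\frac{(q;q)_\infty}{(q^4;q^4)_\infty}.$$
   Context: $(a;q)_n=\prod_{k=0}^{n-1}(1-aq^k)$, $(a;q)_\infty=\prod_{k\ge0}(1-aq^k)$. *)

From Stdlib Require Import Reals.
Open Scope R_scope.

Definition Cpx : Type := (R * R)%type.
Definition RtoC (x : R) : Cpx := (x, 0).
Definition Cadd (z w : Cpx) : Cpx := (fst z + fst w, snd z + snd w).
Definition Copp (z : Cpx) : Cpx := (- fst z, - snd z).
Definition Csub (z w : Cpx) : Cpx := Cadd z (Copp w).
Definition Cmul (z w : Cpx) : Cpx :=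
  (fst z * fst w - snd z * snd w, fst z * snd w + snd z * fst w).
Definition Cinv (z : Cpx) : Cpx :=
  (fst z / (fst z ^ 2 + snd z ^ 2), - snd z / (fst z ^ 2 + snd z ^ 2)).
Definition Cdiv (z w : Cpx) : Cpx := Cmul z (Cinv w).
Definition Cnorm (z : Cpx) : R := sqrt (fst z ^ 2 + snd z ^ 2).
Definition C0 : Cpx := RtoC 0.
Definition C1 : Cpx := RtoC 1.
Fixpoint Cpow (z : Cpx) (n : nat) : Cpx :=
  match n with O => C1 | S m => Cmul z (Cpow z m) end.

Definition Ccv (u : nat -> Cpx) (l : Cpx) : Prop :=
  forall eps : R, eps > 0 -> exists N : nat, forall n : nat, (n >= N)%nat ->
    Cnorm (Csub (u n) l) < eps.

Fixpoint qpoch (a q : Cpx) (n : nat) : Cpx :=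
  match n with
  | O => C1
  | S m => Cmul (qpoch a q m) (Csub C1 (Cmul a (Cpow q m)))
  end.

Definition qpoch_inf (a q : Cpx) (P : Cpx) : Prop := Ccv (fun n => qpoch a q n) P.

Definition term8 (q : Cpx) (n : nat) : Cpx :=
  Cdiv
    (Cmul (Cmul (Cpow q ((2 * n - 1) ^ 2)) (qpoch (Copp q) (Cpow q 2) (2 * n - 1)))
       (Cadd (Cadd (Cadd (Copp C1) (Cpow q (4 * n - 1))) (Cpow q (8 * n)))
             (Cpow q (8 * n - 2))))
    (qpoch (Cpow q 4) (Cpow q 4) (2 * n)).

Fixpoint psum8 (q : Cpx) (N : nat) : Cpx :=
  match N with
  | O => C1
  | S M => Cadd (psum8 q M) (term8 q (S M))
  end.

(* Let F(z) = sum_(m >= 0) t_m(z), where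
     t_m(z) = (-z)^m q^(m^2-m) (-q;q^2)_m / ((q^2;q^2)_m (-qz;q^2)_m)
   ([fterm], [fpart]; the ratio t_(m+1)/t_m is [fratio]).  At z = q the terms are
   (-1)^m q^(m^2) (-q;q^2)_m / (q^4;q^4)_m, and the n-th summand of the theorem is the sum
   of the terms of index 2n-1 and 2n, so its partial sums are the odd partial sums of F(q).
   A finite telescoping identity gives (1 + qz) F(z) = (1 - z) F(zq^2); iterating from z = q,
     F(q) = prod_(k<n) (1 - q^(2k+1)) / (1 + q^(2k+2)) * F(q^(2n+1)),
   and F(q^(2n+1)) -> 1.  The limit of the product is
   (q;q^2)_oo / (-q^2;q^2)_oo = (q;q)_oo / (q^4;q^4)_oo. *)

From Stdlib Require Import Reals Lra Lia.
From Coquelicot Require Import Coquelicot.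
From Pilot Require Import Defs.
Open Scope R_scope.

(* Coquelicot's default uniform structure on [C] is the product one; continuity of the
   multiplication is only available for the absolute-value structure of [C_AbsRing]. *)
Lemma Ccv_filterlim (u : nat -> C) (l : C) :
  Ccv u l <-> filterlim u eventually (@locally (AbsRing_UniformSpace C_AbsRing) l).
Proof.
  etransitivity; [|symmetry; exact (filterlim_locally_ball_norm
    (K := C_AbsRing) (U := AbsRing_NormedModule C_AbsRing) u l)].
  split.
  - intros H eps. destruct (H eps (cond_pos eps)) as [N HN]. now exists N.
  - intros H eps Heps. destruct (H (mkposreal eps Heps)) as [N HN]. now exists N.
Qed.

Lemma Ccv_ext (u v : nat -> C) (l : C) : (forall n, u n = v n) -> Ccv u l -> Ccv v l.
Proof. intro E. rewrite !Ccv_filterlim. now apply filterlim_ext. Qed.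

Lemma Ccv_const (c : C) : Ccv (fun _ => c) c.
Proof. apply Ccv_filterlim, (filterlim_const (U := AbsRing_UniformSpace C_AbsRing)). Qed.

Lemma Ccv_plus (u v : nat -> C) (l m : C) :
  Ccv u l -> Ccv v m -> Ccv (fun n => u n + v n)%C (l + m)%C.
Proof.
  rewrite !Ccv_filterlim. intros Hu Hv.
  exact (filterlim_comp_2 u v Cplus Hu Hv
    (filterlim_plus (V := AbsRing_NormedModule C_AbsRing) l m)).
Qed.

Lemma Ccv_mult (u v : nat -> C) (l m : C) :
  Ccv u l -> Ccv v m -> Ccv (fun n => u n * v n)%C (l * m)%C.
Proof.
  rewrite !Ccv_filterlim. intros Hu Hv.
  exact (filterlim_comp_2 u v Cmult Hu Hv (filterlim_mult (K := C_AbsRing) l m)).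
Qed.

Lemma Ccv_unique (u : nat -> C) (l m : C) : Ccv u l -> Ccv u m -> l = m.
Proof.
  rewrite !Ccv_filterlim. apply (filterlim_locally_unique (V := AbsRing_NormedModule C_AbsRing)).
Qed.

Lemma Ccv_shift (u : nat -> C) (l : C) : Ccv (fun n => u (S n)) l -> Ccv u l.
Proof.
  intros H eps Heps. destruct (H eps Heps) as [N HN]. exists (S N).
  intros [|n] Hn; [lia|]. apply HN. lia.
Qed.

Lemma Ccv_subseq (u : nat -> C) (phi : nat -> nat) (l : C) :
  (forall n, (phi n < phi (S n))%nat) -> Ccv u l -> Ccv (fun n => u (phi n)) l.
Proof.
  intro Hphi. rewrite !Ccv_filterlim. intro Hu.
  exact (filterlim_comp _ _ _ phi u _ _ _ (eventually_subseq phi Hphi) Hu).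
Qed.

Lemma Ccv_zero_le (u : nat -> C) (w : nat -> R) :
  (forall n, Cmod (u n) <= w n) -> is_lim_seq w 0 -> Ccv u (0 : C).
Proof.
  intros Hb Hw. apply Ccv_filterlim, (filterlim_norm_zero (V := AbsRing_NormedModule C_AbsRing)).
  change (is_lim_seq (fun n => Cmod (u n)) 0).
  apply (is_lim_seq_le_le (fun _ => 0) _ w); [|apply is_lim_seq_const|exact Hw].
  intro n. split; [apply Cmod_ge_0|apply Hb].
Qed.

Lemma Ccv_series (a : nat -> C) (l : C) : is_series a l -> Ccv (sum_n a) l.
Proof.
  intros H eps Heps.
  destruct (proj1 (filterlim_locally_ball_norm _ _) H (mkposreal eps Heps)) as [N HN].
  now exists N.
Qed.

Lemma Ccv_dist_le (u : nat -> C) (l c : C) (B : R) :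
  Ccv u l -> (forall n, Cmod (u n - c)%C <= B) -> Cmod (l - c)%C <= B.
Proof.
  intros Hu Hb. apply Rnot_lt_le. intro Hlt.
  destruct (Hu (Cmod (l - c) - B)) as [N HN]; [lra|].
  specialize (HN N (le_n N)). change (Cmod (u N - l)%C < Cmod (l - c) - B) in HN.
  specialize (Hb N).
  assert (T := Cmod_triangle (l - u N) (u N - c)).
  replace (l - u N + (u N - c))%C with (l - c)%C in T by ring.
  replace (l - u N)%C with (- (u N - l))%C in T by ring. rewrite Cmod_opp in T. lra.
Qed.

Lemma pow_le_one (x : R) (n : nat) : 0 <= x <= 1 -> x ^ n <= 1.
Proof. intro H. rewrite <- (pow1 n). now apply pow_incr. Qed.

Lemma Cmod_pow_le1 (x : C) (n : nat) : Cmod x <= 1 -> Cmod (x ^ n)%C <= 1.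
Proof. intro H. rewrite Cmod_pow. apply pow_le_one. split; [apply Cmod_ge_0|exact H]. Qed.

Lemma Cmod_mult_lt1 (x y : C) : Cmod x < 1 -> Cmod y <= 1 -> Cmod (x * y)%C < 1.
Proof.
  intros Hx Hy. rewrite Cmod_mult. assert (H := Cmod_ge_0 x). assert (H' := Cmod_ge_0 y). nra.
Qed.

Lemma Cmod_mult_le1 (x y : C) : Cmod x <= 1 -> Cmod y <= 1 -> Cmod (x * y)%C <= 1.
Proof.
  intros Hx Hy. rewrite Cmod_mult. assert (H := Cmod_ge_0 x). assert (H' := Cmod_ge_0 y). nra.
Qed.

Lemma Cmod_pow_lt1 (x : C) (n : nat) : Cmod x < 1 -> Cmod (x ^ S n)%C < 1.
Proof. intro H. apply Cmod_mult_lt1; [exact H|]. apply Cmod_pow_le1. lra. Qed.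

Lemma Cmod_one_sub_ge (w : C) : 1 - Cmod w <= Cmod (1 - w)%C.
Proof.
  assert (T := Cmod_triangle (1 - w)%C w). replace (1 - w + w)%C with (1 : C) in T by ring.
  rewrite Cmod_1 in T. lra.
Qed.

Lemma Cmod_one_add_ge (w : C) : 1 - Cmod w <= Cmod (1 + w)%C.
Proof.
  replace (1 + w)%C with (1 - - w)%C by ring. rewrite <- (Cmod_opp w). apply Cmod_one_sub_ge.
Qed.

Lemma C_neq0_of_Cmod (w : C) : 0 < Cmod w -> w <> (0 : C).
Proof. intros H E. rewrite E, Cmod_0 in H. lra. Qed.

Lemma one_sub_neq0 (w : C) : Cmod w < 1 -> (1 - w)%C <> (0 : C).
Proof. intro H. apply C_neq0_of_Cmod. assert (T := Cmod_one_sub_ge w). lra. Qed.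

Lemma one_add_neq0 (w : C) : Cmod w < 1 -> (1 + w)%C <> (0 : C).
Proof. intro H. apply C_neq0_of_Cmod. assert (T := Cmod_one_add_ge w). lra. Qed.

Lemma Cdiv_neq_0 (a b : C) : a <> (0 : C) -> b <> (0 : C) -> (a / b)%C <> (0 : C).
Proof.
  intros Ha Hb E. apply Ha. transitivity (a / b * b)%C; [field; exact Hb|]. rewrite E. ring.
Qed.

#[local] Hint Resolve Cmod_mult_lt1 Cmod_mult_le1 Cmod_pow_le1 Cmod_pow_lt1 Rlt_le
  one_sub_neq0 one_add_neq0 : cmod.

Section InfiniteProduct.

Variables (P e : nat -> C) (K r : R).
Hypotheses (HK : 0 <= K) (Hr : 0 <= r < 1).
Hypothesis He : forall k, Cmod (e k) <= K * r ^ k.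
Hypothesis HP : forall k, P (S k) = (P k * (1 + e k))%C.

(* [1 + x <= exp x] turns the product of the [1 + K r^i] into a geometric sum. *)
Lemma prod_partial_bound k : Cmod (P k) <= Cmod (P O) * exp (K * (1 - r ^ k) / (1 - r)).
Proof.
  induction k as [|k IH].
  - simpl. replace (K * (1 - 1) / (1 - r)) with 0 by (field; lra). rewrite exp_0. lra.
  - rewrite HP, Cmod_mult.
    assert (H1 : Cmod (1 + e k)%C <= exp (K * r ^ k)).
    { eapply Rle_trans; [apply Cmod_triangle|]. rewrite Cmod_1.
      eapply Rle_trans; [|apply exp_ineq1_le]. specialize (He k). lra. }
    replace (K * (1 - r ^ S k) / (1 - r)) with (K * (1 - r ^ k) / (1 - r) + K * r ^ k)
      by (simpl; field; lra).
    rewrite exp_plus, <- Rmult_assoc.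
    apply Rmult_le_compat; try apply Cmod_ge_0; assumption.
Qed.

Lemma prod_bound k : Cmod (P k) <= Cmod (P O) * exp (K / (1 - r)).
Proof.
  eapply Rle_trans; [apply prod_partial_bound|].
  apply Rmult_le_compat_l; [apply Cmod_ge_0|].
  assert (L : K * (1 - r ^ k) / (1 - r) <= K / (1 - r)).
  { assert (0 <= r ^ k) by (apply pow_le; lra).
    apply Rmult_le_compat_r; [left; apply Rinv_0_lt_compat; lra | nra]. }
  destruct (Rle_lt_or_eq_dec _ _ L) as [Llt|Leq];
    [left; now apply exp_increasing|now rewrite Leq; right].
Qed.

Lemma prod_cv : exists L : C, Ccv P L.
Proof.
  set (d k := (P (S k) - P k)%C).
  assert (Hd : ex_series d).
  { apply (ex_series_le d (fun k => Cmod (P O) * exp (K / (1 - r)) * K * r ^ k)).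
    - intro k. unfold d. rewrite HP. replace (P k * (1 + e k) - P k)%C with (P k * e k)%C by ring.
      change (Cmod (P k * e k) <= Cmod (P O) * exp (K / (1 - r)) * K * r ^ k).
      rewrite Cmod_mult, Rmult_assoc.
      apply Rmult_le_compat; try apply Cmod_ge_0; [apply prod_bound|apply He].
    - apply (ex_series_scal_l (Cmod (P O) * exp (K / (1 - r)) * K) (fun k => r ^ k)).
      apply ex_series_geom. rewrite Rabs_pos_eq; lra. }
  destruct Hd as [l Hl]. exists (P O + l)%C.
  apply Ccv_shift, (Ccv_ext (fun n => P O + sum_n d n)%C).
  - intro n. induction n as [|n IH].
    + rewrite sum_O. unfold d. change (P O + (P 1%nat - P O) = P 1%nat)%C. ring.
    + rewrite sum_Sn. change (P O + (sum_n d n + d (S n)) = P (S (S n)))%C.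
      rewrite Cplus_assoc, IH. unfold d. ring.
  - apply Ccv_plus; [apply Ccv_const|apply Ccv_series, Hl].
Qed.

End InfiniteProduct.

Lemma qpoch_0 (a p : C) : (qpoch a p 0 : C) = 1%C.
Proof. reflexivity. Qed.

Lemma qpoch_S (a p : C) (m : nat) : (qpoch a p (S m) : C) = (qpoch a p m * (1 - a * p ^ m))%C.
Proof. reflexivity. Qed.

Lemma qpoch_neq0 (a p : C) (m : nat) : Cmod a < 1 -> Cmod p <= 1 -> qpoch a p m <> (0 : C).
Proof.
  intros Ha Hp. induction m as [|m IH].
  - intro E. apply (f_equal fst) in E. simpl in E. lra.
  - rewrite qpoch_S. apply Cmult_neq_0; auto with cmod.
Qed.

Lemma qpoch_cv (a p : C) : Cmod a <= 1 -> Cmod p < 1 -> exists P : C, Ccv (qpoch a p) P.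
Proof.
  intros Ha Hp. apply (prod_cv _ (fun k => - (a * p ^ k))%C 1 (Cmod p)).
  - lra.
  - split; [apply Cmod_ge_0|exact Hp].
  - intro k. rewrite Cmod_opp, Cmod_mult, Cmod_pow.
    assert (0 <= Cmod p ^ k) by (apply pow_le, Cmod_ge_0). nra.
  - intro k. rewrite qpoch_S. ring.
Qed.

(* The reciprocals [1 / (a;p)_n] form an infinite product of the same kind. *)
Lemma qpoch_inv_cv (a p P : C) : Cmod a < 1 -> Cmod p < 1 -> Ccv (qpoch a p) P ->
  P <> (0 : C) /\ Ccv (fun n => / qpoch a p n)%C (/ P)%C.
Proof.
  intros Ha Hp HP.
  assert (Hw : forall k, Cmod (a * p ^ k)%C <= Cmod a /\ Cmod (a * p ^ k)%C <= Cmod p ^ k).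
  { intro k. rewrite Cmod_mult, Cmod_pow. assert (0 <= Cmod a) by apply Cmod_ge_0.
    assert (0 <= Cmod p ^ k) by (apply pow_le, Cmod_ge_0).
    assert (Cmod p ^ k <= 1) by (apply pow_le_one; split; [apply Cmod_ge_0|lra]). nra. }
  assert (Hnz : forall k, (1 - a * p ^ k)%C <> (0 : C)).
  { intro k. apply one_sub_neq0. destruct (Hw k). lra. }
  destruct (prod_cv (fun n => / qpoch a p n)%C (fun k => a * p ^ k / (1 - a * p ^ k))%C
              (/ (1 - Cmod a)) (Cmod p)) as [Q HQ].
  - left. apply Rinv_0_lt_compat. lra.
  - split; [apply Cmod_ge_0|exact Hp].
  - intro k. destruct (Hw k) as [Hw1 Hw2]. rewrite Cmod_div by apply Hnz.
    assert (L := Cmod_one_sub_ge (a * p ^ k)%C).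
    unfold Rdiv. rewrite Rmult_comm.
    apply Rmult_le_compat; [left; apply Rinv_0_lt_compat; lra|apply Cmod_ge_0| |exact Hw2].
    apply Rinv_le_contravar; lra.
  - intro k. rewrite qpoch_S. field.
    split; [apply Hnz|apply qpoch_neq0; lra].
  - assert (HPQ : (P * Q)%C = 1%C).
    { apply (Ccv_unique (fun n => qpoch a p n * / qpoch a p n)%C); [now apply Ccv_mult|].
      apply (Ccv_ext (fun _ => 1%C)); [|apply Ccv_const].
      intro n. field. apply qpoch_neq0; lra. }
    assert (HP0 : P <> (0 : C)).
    { intro E. rewrite E, Cmult_0_l in HPQ. apply (f_equal fst) in HPQ. simpl in HPQ. lra. }
    split; [exact HP0|].
    replace (/ P)%C with Q; [exact HQ|].
    change (@eq C Q (/ P)%C). rewrite <- (Cmult_1_l (/ P)), <- HPQ. field. exact HP0.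
Qed.

Definition fratio (q z : C) (m : nat) : C :=
  (- (1 + q * (q ^ 2) ^ m) * (q ^ 2) ^ m * z
   / ((1 - q ^ 2 * (q ^ 2) ^ m) * (1 + q * z * (q ^ 2) ^ m)))%C.

Fixpoint fterm (q z : C) (m : nat) : C :=
  match m with O => 1 | S m => fterm q z m * fratio q z m end%C.

Fixpoint fpart (q z : C) (N : nat) : C :=
  match N with O => 0 | S N => fpart q z N + fterm q z N end%C.

Section Majorant.

Variable q : C.
Hypothesis hq : Cmod q < 1.

(* Taking [s > 0] rather than [|q|^2] keeps the majorant positive, as the ratio test
   requires. *)
Let r := Cmod q.
Let s := (1 + r) / 2.
Let K := 2 / ((1 - r) * (1 - r)).

Lemma s_bounds : r * r <= s /\ 0 < s < 1.
Proof. assert (H := Cmod_ge_0 q). fold r in H, hq. unfold s. nra. Qed.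

Lemma K_pos : 0 < K.
Proof. assert (H := Cmod_ge_0 q). fold r in H, hq. unfold K. apply Rdiv_lt_0_compat; nra. Qed.

Lemma fratio_bound z m : Cmod z <= 1 -> Cmod (fratio q z m) <= K * s ^ m * Cmod z.
Proof.
  intro Hz. assert (r0 := Cmod_ge_0 q). assert (r1 := hq). fold r in r0, r1.
  destruct s_bounds as [rs [s0 s1]].
  assert (Hq2 : Cmod (q ^ 2)%C = r * r) by (rewrite Cmod_pow; unfold r; ring).
  assert (HX : Cmod ((q ^ 2) ^ m)%C <= s ^ m).
  { rewrite Cmod_pow, Hq2. apply pow_incr. split; nra. }
  assert (HX1 : Cmod ((q ^ 2) ^ m)%C <= 1) by auto with cmod.
  assert (HX0 := Cmod_ge_0 ((q ^ 2) ^ m)%C). assert (Hz0 := Cmod_ge_0 z).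
  assert (Hnum : Cmod (1 + q * (q ^ 2) ^ m)%C <= 2).
  { eapply Rle_trans; [apply Cmod_triangle|]. rewrite Cmod_1, Cmod_mult. fold r. nra. }
  assert (Hden1 : 1 - r <= Cmod (1 - q ^ 2 * (q ^ 2) ^ m)%C).
  { eapply Rle_trans; [|apply Cmod_one_sub_ge]. rewrite Cmod_mult, Hq2.
    assert (r * r * Cmod ((q ^ 2) ^ m)%C <= r * r * 1) by (apply Rmult_le_compat_l; nra).
    assert (r * r <= r * 1) by (apply Rmult_le_compat_l; lra). lra. }
  assert (Hden2 : 1 - r <= Cmod (1 + q * z * (q ^ 2) ^ m)%C).
  { eapply Rle_trans; [|apply Cmod_one_add_ge]. rewrite !Cmod_mult. fold r.
    assert (Cmod z * Cmod ((q ^ 2) ^ m)%C <= 1) by nra. nra. }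
  unfold fratio. rewrite Cmod_div by (apply Cmult_neq_0; apply C_neq0_of_Cmod; lra).
  rewrite !Cmod_mult, Cmod_opp. unfold K, Rdiv.
  replace (2 * / ((1 - r) * (1 - r)) * s ^ m * Cmod z)
    with ((2 * s ^ m * Cmod z) * / ((1 - r) * (1 - r))) by ring.
  apply Rmult_le_compat.
  - repeat apply Rmult_le_pos; apply Cmod_ge_0.
  - left. apply Rinv_0_lt_compat, Rmult_lt_0_compat; lra.
  - apply Rmult_le_compat; try nra. apply Rmult_le_pos; apply Cmod_ge_0.
  - apply Rinv_le_contravar; [nra|]. apply Rmult_le_compat; lra.
Qed.

Fixpoint majorant (m : nat) : R :=
  match m with O => K | S m => majorant m * (K * s ^ S m) end.

Lemma majorant_pos m : 0 < majorant m.
Proof.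
  destruct s_bounds as [_ [s0 _]]. assert (HK := K_pos).
  induction m as [|m IH]; [exact HK|]. simpl majorant.
  apply Rmult_lt_0_compat; [exact IH|].
  apply Rmult_lt_0_compat; [exact HK|]. apply (pow_lt s (S m) s0).
Qed.

Lemma ex_series_majorant : ex_series majorant.
Proof.
  destruct s_bounds as [_ [s0 s1]].
  apply (ex_series_ext (fun n => Rabs (majorant n))).
  { intro n. apply Rabs_pos_eq. left. apply majorant_pos. }
  apply (ex_series_DAlembert majorant 0); [lra| intro n; apply Rgt_not_eq, majorant_pos|].
  apply (is_lim_seq_ext (fun n => (K * s) * s ^ n)).
  { intro n. rewrite Rabs_pos_eq by (left; apply Rdiv_lt_0_compat; apply majorant_pos).
    assert (H := majorant_pos n). cbn [majorant pow]. field. lra. }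
  replace (Finite 0) with (Rbar_mult (K * s) 0) by (simpl; f_equal; ring).
  apply is_lim_seq_scal_l, is_lim_seq_geom. rewrite Rabs_pos_eq; lra.
Qed.

Lemma fterm_bound z m : Cmod z <= 1 -> Cmod (fterm q z (S m)) <= Cmod z * majorant m.
Proof.
  intro Hz. assert (Hz0 := Cmod_ge_0 z). assert (HK := K_pos).
  destruct s_bounds as [_ [s0 _]].
  induction m as [|m IH].
  - simpl fterm. rewrite Cmult_1_l. eapply Rle_trans; [apply fratio_bound, Hz|]. simpl. lra.
  - change (fterm q z (S (S m))) with (fterm q z (S m) * fratio q z (S m))%C. rewrite Cmod_mult.
    eapply Rle_trans.
    { apply Rmult_le_compat; try apply Cmod_ge_0; [exact IH|apply fratio_bound, Hz]. }
    change (majorant (S m)) with (majorant m * (K * s ^ S m)).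
    assert (H := majorant_pos m).
    assert (0 <= K * s ^ S m) by (apply Rmult_le_pos; [lra|apply pow_le; lra]).
    assert (Cmod z * majorant m * (K * s ^ S m) * Cmod z
            <= Cmod z * majorant m * (K * s ^ S m) * 1).
    { apply Rmult_le_compat_l; [|exact Hz]. apply Rmult_le_pos; [apply Rmult_le_pos|]; lra. }
    lra.
Qed.

End Majorant.

Section FunctionalEquation.

Variable q : C.
Hypothesis hq : Cmod q < 1.

Lemma fpart_SS z n :
  fpart q z (S (S n)) = (1 + sum_n (fun m => fterm q z (S m)) n)%C.
Proof.
  induction n as [|n IH].
  - rewrite sum_O. simpl. change (0 + 1 + 1 * fratio q z 0 = 1 + 1 * fratio q z 0)%C. ring.
  - change (fpart q z (S (S (S n)))) with (fpart q z (S (S n)) + fterm q z (S (S n)))%C.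
    rewrite IH, sum_Sn. change (1 + sum_n (fun m => fterm q z (S m)) n + fterm q z (S (S n))
      = 1 + (sum_n (fun m => fterm q z (S m)) n + fterm q z (S (S n))))%C. ring.
Qed.

Lemma fpart_cv z : Cmod z <= 1 ->
  exists l : C, Ccv (fpart q z) l /\ Cmod (l - 1)%C <= Cmod z * Series (majorant q).
Proof.
  intro Hz. set (a m := fterm q z (S m)).
  assert (Ha : forall m, Cmod (a m) <= Cmod z * majorant q m) by (intro m; now apply fterm_bound).
  assert (Hmaj := ex_series_majorant q hq).
  destruct (ex_series_le (V := C_CompleteNormedModule) a (fun m => Cmod z * majorant q m) Ha)
    as [la Hla]; [exact (ex_series_scal_l (Cmod z) (majorant q) Hmaj)|].
  exists (1 + la)%C. split.
  - apply Ccv_shift, Ccv_shift, (Ccv_ext (fun n => 1 + sum_n a n)%C).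
    + intro n. symmetry. apply fpart_SS.
    + apply Ccv_plus; [apply Ccv_const|now apply Ccv_series].
  - replace (1 + la - 1)%C with (la - 0)%C by ring.
    apply (Ccv_dist_le (sum_n a)); [now apply Ccv_series|]. intro n.
    assert (Hsub0 : forall x : C, (x - 0)%C = x) by (intro x; ring). rewrite Hsub0.
    eapply Rle_trans; [apply (norm_sum_n_m (V := C_NormedModule) a 0 n)|].
    eapply Rle_trans; [apply (sum_n_m_le _ (fun m => Cmod z * majorant q m)), Ha|].
    change (sum_n (fun m => Cmod z * majorant q m) n <= Cmod z * Series (majorant q)).
    rewrite (sum_n_mult_l (K := R_Ring)). apply Rmult_le_compat_l; [apply Cmod_ge_0|].
    apply (is_lim_seq_incr_compare (sum_n (majorant q))); [now apply Series_correct|].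
    intro k. rewrite sum_Sn. assert (H := majorant_pos q hq (S k)).
    change (sum_n (majorant q) k <= sum_n (majorant q) k + majorant q (S k)). lra.
Qed.

Lemma fterm_lim z : Cmod z <= 1 -> is_lim_seq (fun m => Cmod (fterm q z m)) 0.
Proof.
  intro Hz. apply is_lim_seq_incr_1.
  apply (is_lim_seq_le_le (fun _ => 0) _ (fun m => Cmod z * majorant q m)).
  - intro m. split; [apply Cmod_ge_0|now apply fterm_bound].
  - apply is_lim_seq_const.
  - replace (Finite 0) with (Rbar_mult (Cmod z) 0) by (simpl; f_equal; ring).
    apply is_lim_seq_scal_l, ex_series_lim_0, ex_series_majorant, hq.
Qed.

Lemma fterm_shift z N : Cmod z <= 1 ->
  fterm q (z * q ^ 2) N
  = (fterm q z N * (q ^ 2) ^ N * (1 + q * z) / (1 + q * z * (q ^ 2) ^ N))%C.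
Proof.
  intro Hz. induction N as [|N IH].
  - simpl. field. replace (q * z * 1)%C with (q * z)%C by ring. auto 8 with cmod.
  - cbn [fterm]. rewrite IH. unfold fratio. change ((q ^ 2) ^ S N)%C with (q ^ 2 * (q ^ 2) ^ N)%C.
    field. repeat split; auto 8 with cmod.
Qed.

Lemma fpart_shift z N : Cmod z <= 1 ->
  ((1 + q * z) * fpart q z N - (1 - z) * fpart q (z * q ^ 2) N
   = - (1 - (q ^ 2) ^ N) * (1 + q * z) * fterm q z N)%C.
Proof.
  intro Hz. induction N as [|N IH].
  - simpl. ring.
  - cbn [fpart].
    transitivity (((1 + q * z) * fpart q z N - (1 - z) * fpart q (z * q ^ 2) N)
                  + ((1 + q * z) * fterm q z N - (1 - z) * fterm q (z * q ^ 2) N))%C; [ring|].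
    rewrite IH, fterm_shift by exact Hz. cbn [fterm]. unfold fratio.
    change ((q ^ 2) ^ S N)%C with (q ^ 2 * (q ^ 2) ^ N)%C.
    field. repeat split; auto 8 with cmod.
Qed.

(* The finite identity [fpart_shift] passes to the limit because [fterm q z N -> 0]. *)
Lemma fpart_lim_functional_eq z l1 l2 : Cmod z <= 1 ->
  Ccv (fpart q z) l1 -> Ccv (fpart q (z * q ^ 2)) l2 -> ((1 + q * z) * l1 = (1 - z) * l2)%C.
Proof.
  intros Hz H1 H2.
  assert (Hdiff : Ccv (fun N => (1 + q * z) * fpart q z N + (- (1 - z)) * fpart q (z * q ^ 2) N)%C
                      ((1 + q * z) * l1 + (- (1 - z)) * l2)%C).
  { apply Ccv_plus; apply Ccv_mult; try apply Ccv_const; assumption. }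
  assert (Hzero : Ccv (fun N => (1 + q * z) * fpart q z N + (- (1 - z)) * fpart q (z * q ^ 2) N)%C
                      (0 : C)).
  { apply (Ccv_zero_le _ (fun N => 4 * Cmod (fterm q z N))).
    - intro N. replace ((1 + q * z) * fpart q z N + - (1 - z) * fpart q (z * q ^ 2) N)%C
        with ((1 + q * z) * fpart q z N - (1 - z) * fpart q (z * q ^ 2) N)%C by ring.
      rewrite fpart_shift by exact Hz. rewrite !Cmod_mult, Cmod_opp.
      assert (HX : Cmod ((q ^ 2) ^ N)%C <= 1) by auto with cmod.
      assert (E1 : Cmod (1 - (q ^ 2) ^ N)%C <= 2).
      { eapply Rle_trans; [apply Cmod_triangle|]. rewrite Cmod_1, Cmod_opp. lra. }
      assert (E2 : Cmod (1 + q * z)%C <= 2).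
      { eapply Rle_trans; [apply Cmod_triangle|]. rewrite Cmod_1.
        assert (Cmod (q * z)%C < 1) by auto with cmod. lra. }
      apply Rmult_le_compat_r; [apply Cmod_ge_0|].
      replace 4 with (2 * 2) by ring. apply Rmult_le_compat; try apply Cmod_ge_0; assumption.
    - replace (Finite 0) with (Rbar_mult 4 0) by (simpl; f_equal; ring).
      apply is_lim_seq_scal_l, fterm_lim, Hz. }
  assert (E := Ccv_unique _ _ _ Hdiff Hzero).
  transitivity ((1 + q * z) * l1 + - (1 - z) * l2 + (1 - z) * l2)%C; [ring|].
  rewrite E. ring.
Qed.

End FunctionalEquation.

Fixpoint ratio_prod (q : C) (n : nat) : C :=
  match n with
  | O => 1
  | S n => ratio_prod q n * (1 - q * (q ^ 2) ^ n) / (1 + q * (q * (q ^ 2) ^ n))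
  end%C.

Section Iteration.

Variable q : C.
Hypothesis hq : Cmod q < 1.

Lemma ratio_prod_neq0 n : ratio_prod q n <> (0 : C).
Proof.
  induction n as [|n IH]; cbn [ratio_prod].
  - intro E. apply (f_equal fst) in E. simpl in E. lra.
  - apply Cdiv_neq_0; [apply Cmult_neq_0; [exact IH|]|]; auto 8 with cmod.
Qed.

Lemma fpart_lim_iterate (L : C) : Ccv (fpart q q) L ->
  forall n, exists l : C, Ccv (fpart q (q * (q ^ 2) ^ n)) l /\ L = (ratio_prod q n * l)%C.
Proof.
  intros HL n. induction n as [|n [l [Hl E]]].
  - exists L. split; [|simpl; ring].
    apply (Ccv_ext (fpart q q)); [|exact HL]. intro N. now rewrite Cmult_1_r.
  - set (z := (q * (q ^ 2) ^ n)%C).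
    assert (Hz : Cmod z <= 1) by (unfold z; auto with cmod).
    destruct (fpart_cv q hq (z * q ^ 2)%C) as [l' [Hl' _]]; [auto with cmod|].
    assert (F := fpart_lim_functional_eq q hq z l l' Hz Hl Hl').
    assert (Ez : (z * q ^ 2)%C = (q * (q ^ 2) ^ S n)%C).
    { unfold z. change ((q ^ 2) ^ S n)%C with (q ^ 2 * (q ^ 2) ^ n)%C. ring. }
    exists l'. split.
    + rewrite <- Ez. exact Hl'.
    + rewrite E. cbn [ratio_prod]. fold z.
      assert (Hnz : (1 + q * z)%C <> (0 : C)) by auto with cmod.
      transitivity (ratio_prod q n * ((1 + q * z) * l) / (1 + q * z))%C; [field; exact Hnz|].
      rewrite F. field. exact Hnz.
Qed.

Lemma fpart_q_lim (L P : C) : Ccv (fpart q q) L -> Ccv (ratio_prod q) P -> L = P.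
Proof.
  intros HL HP.
  assert (Hu : Ccv (fun n => L / ratio_prod q n - 1)%C (0 : C)).
  { apply (Ccv_zero_le _ (fun n => Series (majorant q) * Cmod q * (Cmod q ^ 2) ^ n)).
    - intro n. destruct (fpart_lim_iterate L HL n) as [l [Hl E]].
      destruct (fpart_cv q hq (q * (q ^ 2) ^ n)%C) as [l' [Hl' Hb]]; [auto with cmod|].
      rewrite <- (Ccv_unique _ _ _ Hl Hl') in Hb.
      replace (L / ratio_prod q n)%C with l by (rewrite E; field; apply ratio_prod_neq0).
      eapply Rle_trans; [exact Hb|]. rewrite Cmod_mult, !Cmod_pow. right. ring.
    - replace (Finite 0) with (Rbar_mult (Series (majorant q) * Cmod q) 0)
        by (simpl; f_equal; ring).
      apply is_lim_seq_scal_l, is_lim_seq_geom.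
      assert (H0 := Cmod_ge_0 q). rewrite Rabs_pos_eq; nra. }
  assert (Hlim := Ccv_mult _ _ _ _ HP (Ccv_plus _ _ _ _ Hu (Ccv_const 1%C))).
  assert (HL' : Ccv (fun n => ratio_prod q n * (L / ratio_prod q n - 1 + 1))%C L).
  { apply (Ccv_ext (fun _ => L)); [|apply Ccv_const]. intro n. field. apply ratio_prod_neq0. }
  rewrite (Ccv_unique _ _ _ HL' Hlim). ring.
Qed.

End Iteration.

Lemma Cpow_double (x : C) (m : nat) : (x ^ (2 * m))%C = (x ^ m * x ^ m)%C.
Proof. replace (2 * m)%nat with (m + m)%nat by lia. apply Cpow_add_r. Qed.

Lemma Cpow_q4 (q : C) (m : nat) : ((q ^ 4) ^ m)%C = ((q ^ 2) ^ m * (q ^ 2) ^ m)%C.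
Proof. rewrite <- Cpow_mult_l. f_equal. ring. Qed.

Lemma qpoch_q_even (q : C) (n : nat) : Cmod q < 1 ->
  (qpoch q q (2 * n) : C) = (ratio_prod q n * qpoch (q ^ 4) (q ^ 4) n)%C.
Proof.
  intro hq. induction n as [|n IH].
  - rewrite !qpoch_0. simpl. ring.
  - replace (2 * S n)%nat with (S (S (2 * n))) by lia.
    rewrite !qpoch_S, IH. cbn [ratio_prod].
    rewrite (Cpow_S q (2 * n)), (Cpow_mult_r q 2 n), Cpow_q4.
    field. auto 8 with cmod.
Qed.

Definition aterm (q : C) (m : nat) : C :=
  (q ^ (m * m)%nat * qpoch (- q) (q ^ 2) m / qpoch (q ^ 4) (q ^ 4) m)%C.

Section Terms.

Variable q : C.
Hypothesis hq : Cmod q < 1.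

Lemma qpoch_q4_neq0 m : qpoch (q ^ 4)%C (q ^ 4)%C m <> (0 : C).
Proof. apply qpoch_neq0; auto with cmod. Qed.

Lemma aterm_S m : aterm q (S m)
  = (aterm q m * (q * (q ^ 2) ^ m) * (1 + q * (q ^ 2) ^ m)
     / ((1 - q ^ 2 * (q ^ 2) ^ m) * (1 + q ^ 2 * (q ^ 2) ^ m)))%C.
Proof.
  unfold aterm. rewrite !qpoch_S.
  replace (S m * S m)%nat with (m * m + S (2 * m))%nat by lia.
  rewrite Cpow_add_r, (Cpow_S q (2 * m)), (Cpow_mult_r q 2 m), Cpow_q4.
  assert (H4 := qpoch_q4_neq0 m).
  field. repeat split; auto 8 with cmod.
Qed.

Lemma fterm_at_q m : fterm q q m = ((-1) ^ m * aterm q m)%C.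
Proof.
  induction m as [|m IH].
  - unfold aterm. rewrite !qpoch_0. simpl. field.
  - cbn [fterm]. rewrite IH, aterm_S, Cpow_S. unfold fratio.
    assert (H4 := qpoch_q4_neq0 m). unfold aterm.
    field. repeat split; auto 8 with cmod.
Qed.

Lemma term8_aterm N :
  (term8 q (S N) : C) = (- aterm q (S (2 * N)) + aterm q (S (S (2 * N))))%C.
Proof.
  unfold term8. set (m := S (2 * N)).
  replace (2 * S N - 1)%nat with m by lia. replace (4 * S N - 1)%nat with (S (2 * m)) by lia.
  replace (8 * S N - 2)%nat with (2 * S (2 * m))%nat by lia.
  replace (8 * S N)%nat with (2 * S (S (2 * m)))%nat by lia.
  replace (2 * S N)%nat with (S m) by lia.
  change Defs.Cpow with Complex.Cpow. change Defs.Cmul with Complex.Cmult.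
  change Defs.Cadd with Complex.Cplus. change Defs.Copp with Complex.Copp.
  change Defs.Cdiv with Complex.Cdiv. change C1 with (1 : C).
  rewrite aterm_S. unfold aterm. rewrite qpoch_S, Nat.pow_2_r.
  rewrite (Cpow_S q (2 * m)), !(Cpow_mult_r q 2), !(Cpow_S (q ^ 2)), Cpow_double, Cpow_q4.
  assert (H4 := qpoch_q4_neq0 m).
  field. repeat split; auto 8 with cmod.
Qed.

Lemma psum8_fpart N : (psum8 q N : C) = fpart q q (S (2 * N)).
Proof.
  induction N as [|N IH].
  - simpl. change C1 with (1 : C). ring.
  - change (psum8 q (S N)) with (psum8 q N + term8 q (S N))%C.
    replace (2 * S N)%nat with (S (S (2 * N))) by lia.
    change (fpart q q (S (S (S (2 * N)))))
      with (fpart q q (S (2 * N)) + fterm q q (S (2 * N)) + fterm q q (S (S (2 * N))))%C.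
    rewrite IH, term8_aterm, !fterm_at_q, !(Cpow_S (-1)), Cpow_mult_r.
    replace ((-1) ^ 2)%C with (1 : C) by ring. rewrite Cpow_1_l. ring.
Qed.

End Terms.

Theorem mainTheorem8 (q : Cpx) (hq : Cnorm q < 1) :
  exists S P1 P2 : Cpx,
    Ccv (psum8 q) S /\
    qpoch_inf q q P1 /\
    qpoch_inf (Cpow q 4) (Cpow q 4) P2 /\
    P2 <> C0 /\
    S = Cdiv P1 P2.
Proof.
  change (Cmod q < 1) in hq. change (Defs.Cpow q 4) with (q ^ 4)%C.
  destruct (qpoch_cv q q) as [P1 HP1]; auto with cmod.
  destruct (qpoch_cv (q ^ 4) (q ^ 4)) as [P2 HP2]; auto with cmod.
  destruct (qpoch_inv_cv (q ^ 4) (q ^ 4) P2) as [HP2nz HQ]; auto with cmod.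
  destruct (fpart_cv q hq q) as [L [HL _]]; auto with cmod.
  assert (Hratio : Ccv (ratio_prod q) (P1 / P2)%C).
  { apply (Ccv_ext (fun n => qpoch q q (2 * n) * / qpoch (q ^ 4) (q ^ 4) n)%C).
    - intro n. rewrite qpoch_q_even by exact hq. field. apply qpoch_q4_neq0, hq.
    - apply Ccv_mult; [|exact HQ].
      apply (Ccv_subseq (qpoch q q) (fun n => 2 * n)%nat); [intro; lia|exact HP1]. }
  exists L, P1, P2. repeat split; try assumption.
  - apply (Ccv_ext (fun N => fpart q q (S (2 * N)))); [intro N; symmetry; apply psum8_fpart, hq|].
    apply (Ccv_subseq (fpart q q) (fun N => S (2 * N))); [intro; lia|exact HL].
  - exact (fpart_q_lim q hq L _ HL Hratio).
Qed.
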